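(* Let $P$ be a poset. If $P$ is well-quasi-ordered and the set $\mathcal{J}^{\neg\downarrow}(P)$ of non-principal ideals of $P$ is a chain under inclusion, then $P$ is better-quasi-ordered.
   Context: An ideal of $P$ is a nonempty initial segment of $P$ which is up-directed; it is principal if it has a largest element. A quasi-ordered set is well-quasi-ordered (wqo) if it is well-founded and has no infinite antichain. Barriers and bqo: finite subsets of $\mathbb{N}$ are identified with their increasing enumerations. For finite $s,t\subseteq\mathbb{N}$ write $s\triangleleft t$ if there is a finite $r\subseteq\mathbb{N}$ such that $s$ is a proper initial segment of $r$ and $t$ is $r$ with its least element removed. A barrier is an infinite set $B$ of finite subsets of $\mathbb{N}$, no member of which is a proper subset of another, such that every infinite $X\subseteq\bigcup B$ has a nonempty initial segment belonging to $B$. A barrier is well-ordered by the lexicographic order; its order type is the type of this well-order. A map $f$ from a barrier $B$ into a quasi-ordered set $Q$ is good if there exist $s,t\in B$ with $s\triangleleft t$ and $f(s)\leq f(t)$, and bad otherwise. For a countable ordinal $\alpha$, $Q$ is $\alpha$-bqo if every map from a barrier of order type at most $\alpha$ into $Q$ is good; $Q$ is better-quasi-ordered (bqo) if it is $\alpha$-bqo for every countable ordinal $\alpha$. *)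

From mathcomp Require Import all_boot.
Set Implicit Arguments. Unset Strict Implicit. Unset Printing Implicit Defensive.

Section Defs.
Variables (T : Type) (le : T -> T -> Prop).

Definition is_poset : Prop :=
  [/\ (forall x, le x x),
      (forall x y, le x y -> le y x -> x = y) &
      (forall x y z, le x y -> le y z -> le x z)].

Definition lt_of (x y : T) : Prop := le x y /\ ~ le y x.

Definition wqo : Prop :=
  well_founded lt_of /\
  ~ (exists f : nat -> T, forall i j, i <> j -> ~ le (f i) (f j)).

Definition is_ideal (I : T -> Prop) : Prop :=
  [/\ (exists x, I x),
      (forall x y, le x y -> I y -> I x) &
      (forall x y, I x -> I y -> exists2 z, I z & le x z /\ le y z)].

Definition is_principal (I : T -> Prop) : Prop :=
  exists2 m, I m & forall x, I x -> le x m.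

Definition set_incl (I J : T -> Prop) : Prop := forall x, I x -> J x.

Definition nonprincipal_ideals_chain : Prop :=
  forall I J, is_ideal I -> ~ is_principal I ->
              is_ideal J -> ~ is_principal J ->
              set_incl I J \/ set_incl J I.

End Defs.

Definition fin_nat (s : seq nat) : bool := sorted ltn s.

Definition init_seg (s : seq nat) (X : nat -> Prop) : Prop :=
  [/\ s <> [::], fin_nat s, (forall x, x \in s -> X x) &
      (forall x, X x -> x <= last 0 s -> x \in s)].

Definition infinite_nat_set (X : nat -> Prop) : Prop :=
  forall n, exists2 m, n <= m & X m.

Definition shift_rel (s t : seq nat) : Prop :=
  exists r : seq nat, [/\ fin_nat r,
    (exists2 k, k < size r & s = take k r) & t = behead r].

Definition is_barrier (B : seq nat -> Prop) : Prop :=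
  [/\ (forall s, B s -> fin_nat s),
      (forall l : seq (seq nat), exists2 s, B s & s \notin l),
      (forall s t, B s -> B t -> {subset s <= t} -> s = t) &
      (forall X : nat -> Prop, infinite_nat_set X ->
         (forall x, X x -> exists2 s, B s & x \in s) ->
         exists2 s, B s & init_seg s X)].

Definition good_map (T : Type) (le : T -> T -> Prop)
    (B : seq nat -> Prop) (f : seq nat -> T) : Prop :=
  exists s t, [/\ B s, B t, shift_rel s t & le (f s) (f t)].

(** bqo: every map from any barrier is good (every barrier has a countable
    lexicographic order type, so this is "alpha-bqo for all countable alpha"). *)
Definition bqo (T : Type) (le : T -> T -> Prop) : Prop :=
  forall B : seq nat -> Prop, is_barrier B -> forall f : seq nat -> T,
    good_map le B f.

(* It suffices to show that every front F is good: every map f from F has a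
   pair u ◁ v with f u <= f v (barriers are fronts).  This is proved by
   well-founded induction on fronts, where C precedes F when C is a front
   contained in a derivative {w | x :: w ∈ F} of F.

   Let f be bad on F.  Using the Nash-Williams (Galvin-Prikry) partition
   theorem and fusion, shrink the base to an infinite N on which, for each
   s ∈ F inside N, the downward closure I(s) of the values of f at the
   ◁-successors of s no longer changes when N is shrunk further; this is
   possible because a wqo has no infinite strictly decreasing sequence of
   downsets.  Then I(s) is an ideal which contains f(t) for the successor
   t of s but not f(s).  By the clopen Ramsey theorem the I(s) may be
   assumed all non-principal or all principal.  In the first case the chain
   hypothesis forces I(s) ⊋ I(t) along successive segments, an infinite
   decreasing sequence of downsets.  In the second case s ↦ max I(s),
   restricted to a derivative of F, is a bad map on a front of smaller
   rank. *)

From mathcomp Require Import all_boot.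
From Stdlib Require Import Classical ClassicalEpsilon FunctionalExtensionality.

Set Implicit Arguments. Unset Strict Implicit. Unset Printing Implicit Defensive.

(** * Infinite subsets of ℕ *)

(* An infinite subset of ℕ is represented by its increasing enumeration. *)
Definition increasing (Z : nat -> nat) := {homo Z : m n / m < n}.

Definition in_range (Y : nat -> nat) x := exists k, Y k = x.

Definition incl (Z Y : nat -> nat) := forall n, in_range Y (Z n).

Definition shift (Z : nat -> nat) k n := Z (k + n).

Definition prepend (s : seq nat) (Z : nat -> nat) n :=
  if n < size s then nth 0 s n else Z (n - size s).

Section Increasing.
Variable Z : nat -> nat.
Hypothesis hZ : increasing Z.

Lemma increasing_leq : {mono Z : m n / m <= n}.
Proof. exact: leq_mono. Qed.

Lemma increasing_ltn : {mono Z : m n / m < n}.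
Proof. exact: leqW_mono increasing_leq. Qed.

Lemma increasing_inj : injective Z.
Proof. exact: incn_inj increasing_leq. Qed.

Lemma increasing_ge n : n <= Z n.
Proof. by elim: n => // n IH; apply: leq_ltn_trans IH (hZ _). Qed.

Lemma increasing_shift k : increasing (shift Z k).
Proof. by move=> m n lt_mn; apply: hZ; rewrite ltn_add2l. Qed.

Lemma sorted_mkseq k : sorted ltn (mkseq Z k).
Proof. by rewrite sorted_map; apply: sub_sorted (iota_ltn_sorted 0 k) => i j /hZ. Qed.

End Increasing.

Lemma increasingS Z : (forall n, Z n < Z n.+1) -> increasing Z.
Proof. exact: homo_ltn ltn_trans. Qed.

Lemma incl_refl Z : incl Z Z.
Proof. by move=> n; exists n. Qed.

Lemma incl_trans Z Y X : incl Z Y -> incl Y X -> incl Z X.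
Proof. by move=> ZY YX n; case: (ZY n) => k <-; apply: YX. Qed.

Lemma incl_shift Z k : incl (shift Z k) Z.
Proof. by move=> n; exists (k + n). Qed.

Lemma incl_shift_leq Z a b : a <= b -> incl (shift Z b) (shift Z a).
Proof. by move=> hab n; exists (b - a + n); rewrite /shift addnA subnKC. Qed.

Lemma shift0 Z : shift Z 0 = Z.
Proof. exact: functional_extensionality. Qed.

Lemma shift_shift Z a b : shift (shift Z a) b = shift Z (a + b).
Proof. by apply: functional_extensionality => n; rewrite /shift addnA. Qed.

Lemma incl_head Z Y : increasing Y -> incl Z Y -> Y 0 <= Z 0.
Proof. by move=> hY hZY; case: (hZY 0) => k <-; rewrite increasing_leq. Qed.

Lemma incl_above Z Y j : increasing Y -> incl Z Y -> (forall n, Y j < Z n) ->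
  incl Z (shift Y j.+1).
Proof.
move=> hY hZY above n; case: (hZY n) (above n) => m <-; rewrite increasing_ltn // => lt_jm.
by exists (m - j.+1); rewrite /shift subnKC.
Qed.

Lemma exists_increasing (P : nat -> Prop) : (forall n, exists2 m, n <= m & P m) ->
  exists2 Y, increasing Y & forall k, P (Y k).
Proof.
move=> hP; have [g hg] : exists g : nat -> nat, forall n, n <= g n /\ P (g n).
  apply: (choice (fun n m => n <= m /\ P m)) => n.
  by have [m] := hP n; exists m.
pose Y := fix Y k := if k is k'.+1 then g (Y k').+1 else g 0.
exists Y; last by case=> [|k]; apply: (hg _).2.
by apply: increasingS => n; apply: (hg _).1.
Qed.

Section Mkseq.
Implicit Types (Z : nat -> nat) (s : seq nat).

Lemma mem_mkseqP Z k y : reflect (exists2 j, j < k & Z j = y) (y \in mkseq Z k).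
Proof.
apply: (iffP mapP) => [[j]|[j lt_jk <-]]; last by exists j; rewrite // mem_iota.
by rewrite mem_iota => /andP[_ lt_jk] ->; exists j.
Qed.

Lemma take_mkseq Z a b : a <= b -> take a (mkseq Z b) = mkseq Z a.
Proof.
move=> hab; rewrite /mkseq -(subnKC hab) iotaD map_cat take_size_cat //.
by rewrite size_map size_iota.
Qed.

Lemma eq_mkseq_lt Z Z' k : (forall i, i < k -> Z i = Z' i) -> mkseq Z k = mkseq Z' k.
Proof.
move=> eqZ; apply: (@eq_from_nth _ 0); rewrite !size_mkseq // => i lt_ik.
by rewrite !nth_mkseq ?eqZ.
Qed.

Lemma mkseq_inj_lt Z Z' k i : mkseq Z k = mkseq Z' k -> i < k -> Z i = Z' i.
Proof. by move=> eqZ lt_ik; rewrite -(nth_mkseq 0 Z lt_ik) eqZ nth_mkseq. Qed.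

Lemma last_mkseq Z k : last 0 (mkseq Z k.+1) = Z k.
Proof. by rewrite mkseqS last_rcons. Qed.

Lemma mkseqS_shift Z k : mkseq Z k.+1 = Z 0 :: mkseq (shift Z 1) k.
Proof. by rewrite /mkseq /= -add1n iotaDl -map_comp. Qed.

Lemma prepend_lt s Z n : n < size s -> prepend s Z n = nth 0 s n.
Proof. by rewrite /prepend => ->. Qed.

Lemma prepend_size s Z n : prepend s Z (size s + n) = Z n.
Proof. by rewrite /prepend ltnNge leq_addr addKn. Qed.

Lemma prepend_nil Z : prepend [::] Z = Z.
Proof. by apply: functional_extensionality => n; rewrite /prepend subn0. Qed.

Lemma shift_prepend s Z : shift (prepend s Z) (size s) = Z.
Proof. by apply: functional_extensionality => n; rewrite /shift prepend_size. Qed.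

Lemma shift1_prepend1 x Z : shift (prepend [:: x] Z) 1 = Z.
Proof. exact: shift_prepend [:: x] Z. Qed.

Lemma mkseq_prepend s Z k : mkseq (prepend s Z) (size s + k) = s ++ mkseq Z k.
Proof.
apply: (@eq_from_nth _ 0); rewrite ?size_cat !size_mkseq // => i lt_i.
rewrite nth_mkseq // nth_cat; case: (ltnP i (size s)) => [|le_si]; first exact: prepend_lt.
by rewrite nth_mkseq ?ltn_subLR // -{1}(subnKC le_si) prepend_size.
Qed.

Lemma mkseq_prepend_size s Z : mkseq (prepend s Z) (size s) = s.
Proof. by have := mkseq_prepend s Z 0; rewrite addn0 cats0. Qed.

Lemma prepend_mkseq_shift Z k : prepend (mkseq Z k) (shift Z k) = Z.
Proof.
apply: functional_extensionality => n; rewrite /prepend size_mkseq.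
by case: ltnP => [|le_kn]; [apply: nth_mkseq | rewrite /shift subnKC].
Qed.

Lemma prepend_rcons_shift s Z : prepend (rcons s (Z 0)) (shift Z 1) = prepend s Z.
Proof.
apply: functional_extensionality => n; rewrite /prepend size_rcons nth_rcons.
case: (ltngtP n (size s)) => [lt_ns|lt_sn|->]; first by rewrite ltnW.
  by rewrite ltnNge lt_sn /shift add1n subnSK.
by rewrite ltnSn subnn.
Qed.

Lemma increasing_prepend s Z : sorted ltn s -> (forall y, y \in s -> y < Z 0) ->
  increasing Z -> increasing (prepend s Z).
Proof.
move=> ss below hZ; apply: increasingS => n; rewrite /prepend.
case: (ltnP n.+1 (size s)) => [lt_Sn|le_sS].
  have lt_ns := ltn_trans (ltnSn n) lt_Sn.
  by rewrite lt_ns (sorted_ltn_nth ltn_trans) ?inE.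
case: (ltnP n (size s)) => [lt_ns|le_sn]; last by rewrite subSn // hZ.
have -> : n.+1 = size s by apply/eqP; rewrite eqn_leq le_sS lt_ns.
by rewrite subnn below ?mem_nth.
Qed.

Lemma incl_prepend s Z Y : (forall y, y \in s -> in_range Y y) -> incl Z Y ->
  incl (prepend s Z) Y.
Proof. by move=> hs hZY n; rewrite /prepend; case: ltnP => // lt_ns; apply/hs/mem_nth. Qed.

End Mkseq.

Section SortedSubseq.
Implicit Types (s l : seq nat) (N : nat -> nat).

Lemma sorted_subset_subseq s l : sorted ltn s -> sorted ltn l -> {subset s <= l} ->
  subseq s l.
Proof.
move=> ss sl sub_sl; suff -> : s = [seq y <- l | y \in s] by apply: filter_subseq.
apply: (irr_sorted_eq ltn_trans ltnn ss (sorted_filter ltn_trans _ sl)) => y.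
by rewrite mem_filter; case: (boolP (y \in s)) => // /sub_sl ->.
Qed.

Lemma sorted_rconsE s x : sorted ltn (rcons s x) = all (ltn^~ x) s && sorted ltn s.
Proof. by rewrite !(sorted_pairwise ltn_trans) pairwise_rcons. Qed.

Lemma sorted_rcons_lt s x y : sorted ltn (rcons s x) -> y \in s -> y < x.
Proof. by rewrite sorted_rconsE => /andP[/allP lt_x _] /lt_x. Qed.

Lemma sorted_rcons s x : sorted ltn (rcons s x) -> sorted ltn s.
Proof. by rewrite sorted_rconsE => /andP[]. Qed.

Lemma subseq_mkseqP N s k : increasing N ->
  reflect (sorted ltn s /\ forall y, y \in s -> exists2 j, j < k & N j = y)
          (subseq s (mkseq N k)).
Proof.
move=> hN; apply: (iffP idP) => [sub_s|[ss hs]].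
  split; first exact: (subseq_sorted ltn_trans sub_s (sorted_mkseq hN k)).
  by move=> y /(mem_subseq sub_s) /mem_mkseqP.
by apply: sorted_subset_subseq ss (sorted_mkseq hN k) _ => y /hs /mem_mkseqP.
Qed.

Lemma leq_sumn_mem s y : y \in s -> y <= sumn s.
Proof. by move=> ys; rewrite (perm_sumn (perm_to_rem ys)) leq_addr. Qed.

Lemma subseq_mkseq_exists N s : increasing N -> sorted ltn s ->
  (forall y, y \in s -> in_range N y) -> exists k, subseq s (mkseq N k).
Proof.
move=> hN ss hs; exists (sumn s).+1; apply/subseq_mkseqP => //; split=> // y ys.
have [j eq_jy] := hs y ys; exists j => //.
by rewrite ltnS (leq_trans (increasing_ge hN j)) // eq_jy leq_sumn_mem.
Qed.

Lemma subseq_rcons_mkseq N s k j : increasing N -> subseq s (mkseq N k) -> k <= j ->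
  subseq (rcons s (N j)) (mkseq N j.+1).
Proof.
move=> hN /(subseq_mkseqP _ _ hN) [ss hs] le_kj; apply/subseq_mkseqP => //; split.
  rewrite sorted_rconsE ss andbT; apply/allP => y /hs [i lt_ik <-] /=.
  by rewrite increasing_ltn // (leq_trans lt_ik).
move=> y; rewrite mem_rcons inE => /orP[/eqP ->|/hs[i lt_ik <-]]; first by exists j.
by exists i; rewrite // ltnS ltnW // (leq_trans lt_ik).
Qed.

Lemma subseq_rcons_mkseq_lt N s j k : increasing N ->
  subseq (rcons s (N j)) (mkseq N k) -> j < k.
Proof.
move=> hN /mem_subseq /(_ (N j)); rewrite mem_rcons mem_head => /(_ isT) /mem_mkseqP.
by case=> i lt_ik /(increasing_inj hN) <-.
Qed.

Lemma subseq_rcons_mkseq_prefix N s i k : increasing N ->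
  subseq (rcons s (N i)) (mkseq N k) -> subseq s (mkseq N i).
Proof.
move=> hN /(subseq_mkseqP _ _ hN) [ss hs]; apply/subseq_mkseqP => //.
split=> [|y ys]; first exact: sorted_rcons ss.
have /hs [j _ eq_jy] : y \in rcons s (N i) by rewrite mem_rcons inE ys orbT.
by exists j; rewrite // -(increasing_ltn hN) eq_jy (sorted_rcons_lt ss).
Qed.

End SortedSubseq.

(** * Fusion and the Nash-Williams theorem *)

Section Fusion.
Variables (Y : nat -> nat) (Q : seq nat -> (nat -> nat) -> Prop).
Hypothesis Q_incl : forall s R R', Q s R -> increasing R' -> incl R' R -> Q s R'.
Hypothesis Q_dense : forall s R, increasing R -> incl R Y ->
  exists R', [/\ increasing R', incl R' R & Q s R'].

Lemma dense_all_subseq l R : increasing R -> incl R Y ->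
  exists R', [/\ increasing R', incl R' R & forall s, subseq s l -> Q s R'].
Proof.
elim: l Q Q_incl Q_dense R => [|x l IH] P P_incl P_dense R hR RY.
  have [R' [hR' R'R PR']] := P_dense [::] R hR RY.
  by exists R'; split=> // s; rewrite subseq0 => /eqP ->.
have [R1 [hR1 R1R PR1]] := IH P P_incl P_dense R hR RY.
have [R2 [hR2 R2R1 PR2]] := IH (fun s => P (x :: s)) (fun s => P_incl (x :: s))
  (fun s => P_dense (x :: s)) R1 hR1 (incl_trans R1R RY).
exists R2; split=> [//||[|y s] /=]; first exact: incl_trans R2R1 R1R.
  by move=> _; apply: P_incl (PR1 [::] (sub0seq l)) hR2 R2R1.
by case: eqP => [-> /PR2 //| _ /PR1 /P_incl]; apply.
Qed.

Section Construction.
Variable pick : seq nat * (nat -> nat) -> nat -> nat.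
Hypothesis pickP : forall lR, increasing lR.2 -> incl lR.2 Y ->
  [/\ increasing (pick lR), incl (pick lR) lR.2 & forall s, subseq s lR.1 -> Q s (pick lR)].
Variable Y0 : nat -> nat.
Hypotheses (hY0 : increasing Y0) (Y0Y : incl Y0 Y).

Fixpoint stage k : seq nat * (nat -> nat) :=
  if k is k'.+1 then
    let: (s, R) := stage k' in let R' := pick (s, R) in (rcons s (R' 0), shift R' 1)
  else ([::], Y0).

Definition reservoir k := pick (stage k).
Definition fused k := reservoir k 0.

Lemma stageS k : stage k.+1 = (rcons (stage k).1 (fused k), shift (reservoir k) 1).
Proof. by rewrite /fused /reservoir /=; case: (stage k). Qed.

Lemma stageP k :
  [/\ increasing (stage k).2, incl (stage k).2 Y0 & (stage k).1 = mkseq fused k].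
Proof.
elim: k => [|k [inc_k incl_k eq_k]]; first by split=> //; apply: incl_refl.
have [inc_R pick_incl _] := pickP inc_k (incl_trans incl_k Y0Y).
rewrite stageS /= eq_k -mkseqS; split=> //; first exact: increasing_shift.
exact: incl_trans (incl_shift _ _) (incl_trans pick_incl incl_k).
Qed.

Lemma reservoirP k : [/\ increasing (reservoir k), incl (reservoir k) (stage k).2 &
  forall s, subseq s (mkseq fused k) -> Q s (reservoir k)].
Proof.
have [inc_k incl_k eq_k] := stageP k; rewrite -eq_k.
exact: pickP inc_k (incl_trans incl_k Y0Y).
Qed.

Lemma reservoirS k : incl (reservoir k.+1) (shift (reservoir k) 1).
Proof. by have [_ + _] := reservoirP k.+1; rewrite stageS. Qed.

Lemma reservoir_decr k n : incl (reservoir (k + n)) (reservoir k).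
Proof.
elim: n => [|n IH]; first by rewrite addn0; apply: incl_refl.
by rewrite addnS; apply: incl_trans (reservoirS _) (incl_trans (incl_shift _ _) IH).
Qed.

Lemma increasing_fused : increasing fused.
Proof.
apply: increasingS => k; rewrite /fused; have [m <-] := reservoirS k 0.
by have [inc_k _ _] := reservoirP k; apply: inc_k.
Qed.

Lemma incl_fused_shift k : incl (shift fused k) (reservoir k).
Proof. by move=> n; apply: reservoir_decr k n 0. Qed.

Lemma fusedP : [/\ increasing fused, incl fused Y0 &
  forall k s, subseq s (mkseq fused k) -> Q s (shift fused k)].
Proof.
split=> [||k s sub_s]; first exact: increasing_fused.
  move=> k; have [_ incl_k _] := reservoirP k; have [_ incl_s _] := stageP k.
  exact: incl_trans incl_k incl_s 0.
have [_ _ Q_k] := reservoirP k.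
exact: Q_incl (Q_k s sub_s) (increasing_shift increasing_fused k) (incl_fused_shift k).
Qed.

End Construction.

Lemma fusion Y0 : increasing Y0 -> incl Y0 Y -> exists N, [/\ increasing N, incl N Y0 &
  forall k s, subseq s (mkseq N k) -> Q s (shift N k)].
Proof.
move=> hY0 Y0Y.
have [pick pickP] : exists pick : seq nat * (nat -> nat) -> nat -> nat,
    forall lR, increasing lR.2 -> incl lR.2 Y -> [/\ increasing (pick lR),
      incl (pick lR) lR.2 & forall s, subseq s lR.1 -> Q s (pick lR)].
  apply: (choice (fun lR R' => increasing lR.2 -> incl lR.2 Y ->
    [/\ increasing R', incl R' lR.2 & forall s, subseq s lR.1 -> Q s R'])) => -[l R] /=.
  case: (classic (increasing R /\ incl R Y)) => [[hR RY]|not_R].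
    by have [R' ?] := dense_all_subseq l hR RY; exists R'.
  by exists R => hR RY; case: not_R.
by exists (fused pick Y0); apply: fusedP.
Qed.
End Fusion.

Definition meets (G : seq nat -> Prop) (Z : nat -> nat) := exists k, G (mkseq Z k).

Section NashWilliams.
Variable G : seq nat -> Prop.

Definition accepts s R := forall Z, increasing Z -> incl Z R -> meets G (prepend s Z).
Definition rejects s R := forall R', increasing R' -> incl R' R -> ~ accepts s R'.

Lemma accepts_incl s R R' : accepts s R -> incl R' R -> accepts s R'.
Proof. by move=> acc R'R Z hZ ZR'; apply: acc hZ (incl_trans ZR' R'R). Qed.

Lemma rejects_incl s R R' : rejects s R -> incl R' R -> rejects s R'.
Proof. by move=> rej R'R R'' hR'' R''R'; apply: rej hR'' (incl_trans R''R' R'R). Qed.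

Lemma decides_incl s R R' : accepts s R \/ rejects s R -> incl R' R ->
  accepts s R' \/ rejects s R'.
Proof.
by move=> [acc|rej] R'R; [left; apply: accepts_incl acc R'R | right; apply: rejects_incl rej R'R].
Qed.

Lemma decides_dense s R : increasing R ->
  exists R', [/\ increasing R', incl R' R & accepts s R' \/ rejects s R'].
Proof.
move=> hR; case: (classic (exists R', [/\ increasing R', incl R' R & accepts s R'])).
  by move=> [R' [hR' R'R acc]]; exists R'; split=> //; left.
move=> none; exists R; split=> //; first exact: incl_refl.
by right => R' hR' R'R acc; apply: none; exists R'.
Qed.

Section Rejection.
Variable N : nat -> nat.
Hypothesis hN : increasing N.
Hypothesis decided : forall k s, subseq s (mkseq N k) ->
  accepts s (shift N k) \/ rejects s (shift N k).
Hypothesis rejects_nil : rejects [::] N.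

Lemma rejects_rcons_eventually s k : subseq s (mkseq N k) -> rejects s (shift N k) ->
  exists K, forall j, K <= j -> k <= j -> rejects (rcons s (N j)) (shift N j.+1).
Proof.
move=> sub_s rej_s; apply: NNPP => no_K.
have often K : exists2 j, K <= j & accepts (rcons s (N j)) (shift N j.+1) /\ k <= j.
  apply: NNPP => none; apply: no_K; exists (maxn K k) => j.
  rewrite geq_max => /andP[le_Kj le_kj] _.
  have [acc|//] := decided (subseq_rcons_mkseq hN sub_s le_kj).
  by case: none; exists j.
have [J hJ /all_and2[acc_J le_kJ]] := exists_increasing often.
pose W i := N (J i).
have hW : increasing W by move=> i i' /hJ; rewrite /W (increasing_ltn hN).
apply: (rej_s W hW) => [i|Z hZ ZW]; first by exists (J i - k); rewrite /shift subnKC.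
have [i eq_Z0] := ZW 0.
have Z1N : incl (shift Z 1) (shift N (J i).+1).
  apply: incl_above => // n; rewrite /shift; last by rewrite -/(W i) eq_Z0 hZ.
  by have [i' <-] := ZW (1 + n); exists (J i').
have := acc_J i _ (increasing_shift hZ 1) Z1N.
by rewrite -/(W i) eq_Z0 prepend_rcons_shift.
Qed.

Definition on_N s := exists k, subseq s (mkseq N k).
Definition rejected s := forall k, subseq s (mkseq N k) -> rejects s (shift N k).
Definition rejects_extensions s (R : nat -> nat) := on_N s -> rejected s ->
  forall n j, R n = N j -> rejects (rcons s (N j)) (shift N j.+1).

Lemma rejects_extensions_incl s R R' : rejects_extensions s R -> increasing R' ->
  incl R' R -> rejects_extensions s R'.
Proof.
move=> ext _ R'R on_s rej_s n j eq_n.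
by have [m eq_m] := R'R n; apply: (ext on_s rej_s m); rewrite eq_m.
Qed.

Lemma rejects_extensions_dense s R : increasing R -> incl R N ->
  exists R', [/\ increasing R', incl R' R & rejects_extensions s R'].
Proof.
move=> hR _; case: (classic (on_N s /\ rejected s)) => [[[k sub_s] rej_s]|not_s]; last first.
  by exists R; split=> [//||on_s rej_s]; [apply: incl_refl | case: not_s].
have [K rej_K] := rejects_rcons_eventually sub_s (rej_s k sub_s).
exists (shift R (N (maxn K k))); split=> [||_ _ n j eq_n].
- exact: increasing_shift.
- exact: incl_shift.
have : N (maxn K k) <= N j.
  by rewrite -eq_n (leq_trans (leq_addr n _)) // (increasing_ge hR).
by rewrite increasing_leq // geq_max => /andP[le_Kj le_kj]; apply: rej_K.
Qed.

Section Extensions.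
Variable M : nat -> nat.
Hypotheses (hM : increasing M) (MN : incl M N).
Hypothesis ext_M : forall k s, subseq s (mkseq M k) -> rejects_extensions s (shift M k).

Lemma on_N_rcons s x : on_N s -> (forall y, y \in s -> y < x) -> in_range N x ->
  on_N (rcons s x).
Proof.
move=> [k /(subseq_mkseqP _ _ hN)[ss hs]] lt_x Nx; apply: subseq_mkseq_exists => //.
  by rewrite sorted_rconsE ss andbT; apply/allP.
move=> y; rewrite mem_rcons inE => /orP[/eqP -> //|/hs[j _ <-]]; by exists j.
Qed.

Lemma rejected_on_M s k : subseq s (mkseq M k) -> on_N s /\ rejected s.
Proof.
elim/last_ind: s k => [|s x IH] k sub_s.
  by split=> [|k' _]; [exists 0 | apply: rejects_incl rejects_nil (incl_shift N k')].
have [i _ eq_x] : exists2 i, i < k & M i = x.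
  by move/(subseq_mkseqP _ _ hM): sub_s => [_]; apply; rewrite mem_rcons mem_head.
subst x.
have sub_si := subseq_rcons_mkseq_prefix hM sub_s.
have [on_s rej_s] := IH i sub_si.
have [j eq_j] := MN i.
have Mi_Nj : shift M i 0 = N j by rewrite /shift addn0.
have rej_j := ext_M sub_si on_s rej_s Mi_Nj.
rewrite -eq_j in sub_s rej_j *; split.
  apply: on_N_rcons on_s _ (ex_intro _ j erefl) => y.
  move/(subseq_mkseqP _ _ hM): sub_s => [ss _].
  exact: sorted_rcons_lt ss.
move=> k' sub_k'; apply: rejects_incl rej_j (incl_shift_leq _ _).
exact: subseq_rcons_mkseq_lt hN sub_k'.
Qed.

Lemma avoids_on_M Z : increasing Z -> incl Z M -> ~ meets G Z.
Proof.
move=> hZ ZM [L GL].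
have [k sub_k] : exists k, subseq (mkseq Z L) (mkseq M k).
  by apply: subseq_mkseq_exists (sorted_mkseq hZ L) _ => // y /mem_mkseqP[i _ <-].
have [[k' sub_k'] rej] := rejected_on_M sub_k.
apply: (rej k' sub_k' _ (increasing_shift hN k') (incl_refl _)) => Z' _ _.
by exists L; have := mkseq_prepend_size (mkseq Z L) Z'; rewrite size_mkseq => ->.
Qed.

End Extensions.

Lemma rejection_homogeneous : exists M, [/\ increasing M, incl M N &
  forall Z, increasing Z -> incl Z M -> ~ meets G Z].
Proof.
have [M [hM MN ext_M]] := fusion rejects_extensions_incl rejects_extensions_dense hN (incl_refl N).
by exists M; split=> //; apply: avoids_on_M.
Qed.

End Rejection.

Theorem nash_williams Y : increasing Y -> exists N, [/\ increasing N, incl N Y &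
  (forall Z, increasing Z -> incl Z N -> ~ meets G Z) \/
  (forall Z, increasing Z -> incl Z N -> meets G Z)].
Proof.
move=> hY; have [N [hN NY decided]] :=
  fusion (fun s R R' dec _ => decides_incl dec) (fun s R hR _ => decides_dense s hR)
    hY (incl_refl Y).
have := decided 0 [::] (sub0seq _); rewrite shift0 => -[acc|rej]; last first.
  have [M [hM MN avoids]] := rejection_homogeneous hN decided rej.
  by exists M; split=> //; [apply: incl_trans MN NY | left].
by exists N; split=> //; right => Z hZ ZN; have := acc Z hZ ZN; rewrite prepend_nil.
Qed.

End NashWilliams.

Definition clopen_on (Y : nat -> nat) (c : (nat -> nat) -> Prop) :=
  forall Z, increasing Z -> incl Z Y -> exists k, forall Z', increasing Z' -> incl Z' Y ->
    mkseq Z' k = mkseq Z k -> (c Z' <-> c Z).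

Lemma ramsey_clopen Y c : increasing Y -> clopen_on Y c -> exists N, [/\ increasing N, incl N Y &
  (forall Z, increasing Z -> incl Z N -> c Z) \/ (forall Z, increasing Z -> incl Z N -> ~ c Z)].
Proof.
move=> hY c_clopen.
pose G w := forall Z, increasing Z -> incl Z Y -> mkseq Z (size w) = w -> c Z.
have [N [hN NY [avoids|meets_all]]] := nash_williams G hY; exists N; split=> //.
  right => Z hZ ZN cZ; have ZY := incl_trans ZN NY; have [k c_k] := c_clopen Z hZ ZY.
  apply: (avoids Z hZ ZN); exists k => Z' hZ' Z'Y; rewrite size_mkseq => eqZ'.
  exact/(c_k Z' hZ' Z'Y eqZ').
left => Z hZ ZN; have [k G_k] := meets_all Z hZ ZN.
by apply: G_k; [|exact: incl_trans ZN NY|rewrite size_mkseq].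
Qed.

(** * Fronts *)

Section DescendingChains.
Variables (A : Type) (R : A -> A -> Prop).

Definition descending (a : nat -> A) := forall n, R (a n.+1) (a n).

Lemma wf_no_descending : well_founded R -> forall a, ~ descending a.
Proof.
move=> R_wf a; suff no_chain x : Acc R x -> forall b, b 0 = x -> ~ descending b.
  exact: no_chain (R_wf _) a erefl.
elim=> {}x _ IH b eq_b0 b_desc.
apply: (IH (b 1) _ (fun n => b n.+1) erefl) => [|n]; first by rewrite -eq_b0; apply: b_desc.
exact: b_desc n.+1.
Qed.

Lemma no_descending_wf : (forall a, ~ descending a) -> well_founded R.
Proof.
move=> no_chain x; apply: NNPP => not_acc.
have step (y : {y | ~ Acc R y}) : {z : {z | ~ Acc R z} | R (sval z) (sval y)}.
  case: y => y not_acc_y; apply: constructive_indefinite_description.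
  apply: NNPP => none; apply: (not_acc_y); constructor => z Rzy; apply: NNPP => not_acc_z.
  by apply: none; exists (exist _ z not_acc_z).
pose b := fix b n := if n is n'.+1 then sval (step (b n')) else exist _ x not_acc.
by apply: (no_chain (fun n => sval (b n))) => n; apply: svalP (step (b n)).
Qed.

End DescendingChains.

Definition thin (F : seq nat -> Prop) :=
  forall u v, F u -> F v -> u = take (size u) v -> u = v.

Definition front (F : seq nat -> Prop) (Y : nat -> nat) :=
  [/\ forall u, F u -> sorted ltn u /\ (forall y, y \in u -> in_range Y y),
      thin F &
      forall Z, increasing Z -> incl Z Y -> exists k, F (mkseq Z k)].

Definition front_lt (C F : seq nat -> Prop) :=
  (exists2 Y, increasing Y & front C Y) /\ exists x, forall w, C w -> F (x :: w).

(* In a descending chain a_0, a_1, ... with witnesses x_0, x_1, ..., every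
   [x_1; ...; x_n] followed by a member of a_(n+1) lies in a_1; since a_1 is
   a front, this gives two members of a_1, one a proper prefix of the other. *)
Lemma front_lt_wf : well_founded front_lt.
Proof.
apply: no_descending_wf => a a_desc.
have [x x_desc] : exists x : nat -> nat, forall n w, a n.+1 w -> a n (x n :: w).
  by apply: (choice (fun n x => forall w, a n.+1 w -> a n (x :: w))) => n; case: (a_desc n).
have [Y Y_front] : exists Y : nat -> nat -> nat, forall n, increasing (Y n) /\ front (a n.+1) (Y n).
  apply: (choice (fun n Y => increasing Y /\ front (a n.+1) Y)) => n.
  by have [[Y ? ?] _] := a_desc n; exists Y.
pose g i := x i.+1.
have in_a1 n w : a n.+1 w -> a 1 (mkseq g n ++ w).
  elim: n w => // n IH w /(x_desc n.+1) /IH.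
  by rewrite mkseqS cat_rcons.
have [hY1 [a1_sorted a1_thin a1_front]] := Y_front 0.
have nonempty n : exists w, a n.+1 w.
  have [hY [_ _ frontY]] := Y_front n.
  by have [k ?] := frontY (Y n) hY (incl_refl _); exists (mkseq (Y n) k).
have g_sorted n : sorted ltn (mkseq g n) /\ (forall y, y \in mkseq g n -> in_range (Y 0) y).
  have [w /in_a1 /a1_sorted [ss sY]] := nonempty n; split=> [|y yg].
    by apply: (subseq_sorted ltn_trans _ ss); apply: prefix_subseq.
  by apply/sY; rewrite mem_cat yg.
have hg : increasing g.
  apply: increasingS => i; have [+ _] := g_sorted i.+2; rewrite mkseqS => /sorted_rcons_lt.
  by apply; rewrite mkseqS mem_rcons mem_head.
have gY : incl g (Y 0).
  by move=> i; have [_] := g_sorted i.+1; apply; rewrite mkseqS mem_rcons mem_head.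
have [k a1_k] := a1_front g hg gY.
have [w /in_a1 a1_kw] := nonempty k.+1.
have := congr1 size (a1_thin _ _ a1_k a1_kw _).
rewrite size_cat !size_mkseq take_cat size_mkseq ltnSn take_mkseq // => /(_ erefl) /eqP.
by rewrite -addn1 -addnA -{1}[k]addn0 eqn_add2l.
Qed.

(** * Every front is good *)

Section Wqo.
Variables (T : Type) (le : T -> T -> Prop).
Hypothesis le_wqo : wqo le.

Lemma wqo_no_bad_sequence (x : nat -> T) : ~ (forall i j, i < j -> ~ le (x i) (x j)).
Proof.
move=> x_bad; have [lt_wf no_antichain] := le_wqo.
pose descent Z := lt_of le (x (Z 1)) (x (Z 0)).
have id_incr : increasing id by [].
have descent_clopen : clopen_on id descent.
  move=> Z _ _; exists 2 => Z' _ _ eqZ.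
  by rewrite /descent (mkseq_inj_lt (i := 0) eqZ) // (mkseq_inj_lt (i := 1) eqZ).
have [N [hN _ [desc|no_desc]]] := ramsey_clopen id_incr descent_clopen.
  apply: (wf_no_descending lt_wf (a := fun n => x (N n))) => n.
  have := desc _ (increasing_shift hN n) (incl_shift N n).
  by rewrite /descent /shift addn1 addn0.
apply: no_antichain; exists (fun n => x (N n)) => i j.
case: (ltngtP i j) => [lt_ij|lt_ji|->] // _; first exact: x_bad (hN _ _ lt_ij).
move=> le_ij; apply: (no_desc (prepend [:: N j] (shift N i))).
- apply: increasing_prepend (increasing_shift hN i) => // y; rewrite inE => /eqP ->.
  by rewrite /shift addn0 hN.
- by apply: incl_prepend (incl_shift N i) => y; rewrite inE => /eqP ->; exists j.
- rewrite /descent /prepend /= /shift addn0; split=> // le_ji.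
  exact: x_bad (hN _ _ lt_ji) le_ji.
Qed.

Definition downclosed (D : T -> Prop) := forall x y, le x y -> D y -> D x.

Definition proper_downset (D' D : T -> Prop) :=
  [/\ downclosed D', forall x, D' x -> D x & exists x, D x /\ ~ D' x].

Lemma proper_downset_wf : well_founded proper_downset.
Proof.
apply: no_descending_wf => D D_desc.
have [x x_new] : exists x : nat -> T, forall n, D n (x n) /\ ~ D n.+1 (x n).
  apply: (choice (fun n y => D n y /\ ~ D n.+1 y)) => n.
  by have [_ _ [y ?]] := D_desc n; exists y.
have D_decr m k y : D (m + k) y -> D m y.
  elim: k y => [|k IH] y; first by rewrite addn0.
  by rewrite addnS => Dy; apply: IH; case: (D_desc (m + k)) => _ + _; apply.
apply: (wqo_no_bad_sequence (x := x)) => i j lt_ij le_ij.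
have Dj : D i.+1 (x j) by apply: (D_decr _ (j - i.+1)); rewrite subnKC //; case: (x_new j).
by case: (x_new i) => _; apply; case: (D_desc i) => down _ _; apply: down le_ij Dj.
Qed.

End Wqo.

Section Main.
Variables (T : Type) (le : T -> T -> Prop).
Hypotheses (le_po : is_poset le) (le_wqo : wqo le).
Hypothesis le_chain : nonprincipal_ideals_chain le.

Lemma le_refl x : le x x. Proof. by case: le_po. Qed.
Lemma le_anti x y : le x y -> le y x -> x = y. Proof. by case: le_po => _ + _; apply. Qed.

Definition good_front (F : seq nat -> Prop) := forall Y, increasing Y -> front F Y ->
  forall f : seq nat -> T, exists Z u v, [/\ increasing Z, incl Z Y, F u & F v] /\
    [/\ u = mkseq Z (size u), v = mkseq (shift Z 1) (size v) & le (f u) (f v)].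

Definition is_max (D : T -> Prop) m := D m /\ forall x, D x -> le x m.

Section BadMap.
Variables (F : seq nat -> Prop) (Y : nat -> nat) (f : seq nat -> T).
Hypotheses (hY : increasing Y) (F_front : front F Y).
Hypothesis f_bad : forall Z u v, increasing Z -> incl Z Y -> F u -> F v ->
  u = mkseq Z (size u) -> v = mkseq (shift Z 1) (size v) -> ~ le (f u) (f v).
Hypothesis front_IH : forall C, front_lt C F -> good_front C.

Lemma F_meets Z : increasing Z -> incl Z Y -> exists k, F (mkseq Z k).
Proof. by case: F_front => _ _; apply. Qed.

(* Meaningful only when some initial segment of [Z] lies in [F]. *)
Definition prefix_len Z := epsilon (inhabits 0) (fun k => F (mkseq Z k)).
Definition prefix Z := mkseq Z (prefix_len Z).

Lemma F_mkseq_inj Z a b : F (mkseq Z a) -> F (mkseq Z b) -> a = b.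
Proof.
have [_ F_thin _] := F_front.
wlog le_ab : a b / a <= b => [sym Fa Fb|Fa Fb].
  by case: (leqP a b) => [|/ltnW] le_ab; [apply: sym | apply/esym/sym].
have := F_thin _ _ Fa Fb; rewrite size_mkseq take_mkseq // => /(_ erefl) /(congr1 size).
by rewrite !size_mkseq.
Qed.

Lemma prefixE Z k : F (mkseq Z k) -> prefix Z = mkseq Z k.
Proof.
move=> Fk; have Fpre : F (prefix Z).
  by apply: (epsilon_spec (inhabits 0) (fun k => F (mkseq Z k))); exists k.
by rewrite /prefix (F_mkseq_inj Fpre Fk).
Qed.

Lemma F_prefix Z : increasing Z -> incl Z Y -> F (prefix Z).
Proof. by move=> hZ ZY; have [k Fk] := F_meets hZ ZY; rewrite (prefixE Fk). Qed.

Lemma F_nil : ~ F [::].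
Proof. by move=> F0; apply: (f_bad hY (incl_refl Y) F0 F0) => //; apply: le_refl. Qed.

Lemma prefix_len_gt0 Z : increasing Z -> incl Z Y -> 0 < prefix_len Z.
Proof. by move=> hZ ZY; have := F_prefix hZ ZY; rewrite /prefix; case: prefix_len => // /F_nil. Qed.

Lemma prefix_eq Z Z' : increasing Z -> incl Z Y -> mkseq Z' (prefix_len Z) = prefix Z ->
  prefix Z' = prefix Z.
Proof. by move=> hZ ZY eqZ; rewrite (@prefixE Z' (prefix_len Z)) eqZ //; apply: F_prefix. Qed.

Definition phi Z := f (prefix Z).

Lemma phi_bad Z : increasing Z -> incl Z Y -> ~ le (phi Z) (phi (shift Z 1)).
Proof.
move=> hZ ZY; have hZ1 := increasing_shift hZ 1; have Z1Y := incl_trans (incl_shift Z 1) ZY.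
by apply: f_bad hZ ZY (F_prefix hZ ZY) (F_prefix hZ1 Z1Y) _ _; rewrite /prefix size_mkseq.
Qed.

Definition admissible s R :=
  [/\ sorted ltn s, forall y, y \in s -> in_range Y y /\ y < R 0, increasing R & incl R Y].

(* [f] at the ◁-successor of the [F]-segment of [s] followed by [R]. *)
Definition succ_val s R := phi (shift (prepend s R) 1).

Lemma admissible_prepend s R : admissible s R ->
  increasing (prepend s R) /\ incl (prepend s R) Y.
Proof.
case=> ss sY hR RY; split; first by apply: increasing_prepend => // y /sY[].
by apply: incl_prepend => // y /sY[].
Qed.

Lemma admissible_incl s R R' : admissible s R -> increasing R' -> incl R' R ->
  admissible s R'.
Proof.
case=> ss sY hR RY hR' R'R; split=> //; last exact: incl_trans R'R RY.
by move=> y /sY[Yy lt_y]; split=> //; apply: leq_trans lt_y (incl_head hR R'R).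
Qed.

Lemma le_succ_val_clopen a s R : admissible s R -> clopen_on R (fun Z => le a (succ_val s Z)).
Proof.
move=> adm Z hZ ZR; have [hsZ sZY] := admissible_prepend (admissible_incl adm hZ ZR).
exists (prefix_len (shift (prepend s Z) 1)).+1 => Z' hZ' Z'R eqZ.
suff -> : succ_val s Z' = succ_val s Z by [].
rewrite /succ_val /phi; congr f; apply: prefix_eq.
- exact: increasing_shift.
- exact: incl_trans (incl_shift _ 1) sZY.
apply: eq_mkseq_lt => i lt_i; rewrite /shift /prepend; case: ltnP => // _.
by apply: (mkseq_inj_lt eqZ); rewrite ltnS (leq_trans (leq_subr _ _)) // add1n.
Qed.

Definition below_vals s (A : nat -> Prop) x :=
  exists R', [/\ increasing R', forall n, A (R' n) & le x (succ_val s R')].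

Lemma below_vals_down s A : downclosed le (below_vals s A).
Proof.
move=> x y le_xy [R' [hR' AR' le_y]]; exists R'; split=> //.
by case: le_po => _ _; apply; [apply: le_xy | apply: le_y].
Qed.

Lemma below_vals_incl s R R' x : incl R' R ->
  below_vals s (in_range R') x -> below_vals s (in_range R) x.
Proof.
by move=> R'R [R'' [hR'' R''R' le_x]]; exists R''; split=> //; apply: incl_trans R''R' R'R.
Qed.

Lemma below_vals_ext s A A' : (forall y, A y <-> A' y) ->
  forall x, below_vals s A x <-> below_vals s A' x.
Proof. by move=> eqA x; split=> -[R' [hR' AR' le_x]]; exists R'; split=> // n; apply/eqA. Qed.

Definition stable s R := forall R', increasing R' -> incl R' R ->
  forall x, below_vals s (in_range R) x -> below_vals s (in_range R') x.

Definition const_at_max s R := forall m, is_max (below_vals s (in_range R)) m ->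
  forall R', increasing R' -> incl R' R -> succ_val s R' = m.

Definition tame s R := forall R', increasing R' -> incl R' R -> admissible s R' ->
  stable s R' /\ const_at_max s R'.

Lemma stable_incl s R R' : stable s R -> increasing R' -> incl R' R -> stable s R'.
Proof.
move=> st _ R'R R'' hR'' R''R' x /(below_vals_incl R'R) Rx.
exact: st hR'' (incl_trans R''R' R'R) x Rx.
Qed.

Lemma const_at_max_incl s R R' : stable s R -> const_at_max s R ->
  increasing R' -> incl R' R -> const_at_max s R'.
Proof.
move=> st max_R hR' R'R m [R'm m_max] R'' hR'' R''R'.
apply: max_R hR'' (incl_trans R''R' R'R); split; first exact: below_vals_incl R'R R'm.
by move=> x /(st R' hR' R'R) /m_max.
Qed.

Lemma tame_incl s R R' : tame s R -> increasing R' -> incl R' R -> tame s R'.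
Proof. by move=> tm _ R'R R'' hR'' R''R'; apply: tm hR'' (incl_trans R''R' R'R). Qed.

Lemma exists_stable s R : admissible s R ->
  exists R1, [/\ increasing R1, incl R1 R & stable s R1].
Proof.
suff gen : forall D R, admissible s R -> (forall x, D x <-> below_vals s (in_range R) x) ->
    exists R1, [/\ increasing R1, incl R1 R & stable s R1].
  by move=> adm; apply: (gen _ R adm (fun x => iff_refl _)).
(* Each failure of stability strictly shrinks the downset. *)
elim/(well_founded_ind (proper_downset_wf le_wqo)) => D IH R0 adm0 eqD.
case: (classic (stable s R0)) => [st0|not_st0].
  by exists R0; split=> //; [case: adm0 | apply: incl_refl].
have [R' [hR' R'R0 [x [R0x not_R'x]]]] : exists R', [/\ increasing R', incl R' R0 &
    exists x, below_vals s (in_range R0) x /\ ~ below_vals s (in_range R') x].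
  apply: NNPP => none; apply: not_st0 => R' hR' R'R0 x R0x; apply: NNPP => not_R'x.
  by apply: none; exists R'; split=> //; exists x.
have lt_D : proper_downset le (below_vals s (in_range R')) D.
  split; first exact: below_vals_down.
    by move=> y /(below_vals_incl R'R0) /eqD.
  by exists x; split=> //; apply/eqD.
have [R1 [hR1 R1R' st1]] := IH _ lt_D R' (admissible_incl adm0 hR' R'R0) (fun _ => iff_refl _).
by exists R1; split=> //; apply: incl_trans R1R' R'R0.
Qed.

Lemma stable_directed s R : admissible s R -> stable s R ->
  forall a b, below_vals s (in_range R) a -> below_vals s (in_range R) b ->
  exists2 c, below_vals s (in_range R) c & le a c /\ le b c.
Proof.
move=> adm st a b Ra Rb; have [_ _ hR _] := adm.
have [N [hN NR [above|not_above]]] := ramsey_clopen hR (le_succ_val_clopen a adm).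
  have [R3 [hR3 R3N le_b]] := st N hN NR b Rb.
  exists (succ_val s R3); last by split=> //; apply: above.
  by exists R3; split=> //; [apply: incl_trans R3N NR | apply: le_refl].
by have [R3 [hR3 R3N le_a]] := st N hN NR a Ra; case: (not_above R3 hR3 R3N le_a).
Qed.

Lemma const_at_max_dense s R : admissible s R -> stable s R ->
  exists R', [/\ increasing R', incl R' R & stable s R' /\ const_at_max s R'].
Proof.
move=> adm st; have [_ _ hR _] := adm.
case: (classic (exists m, is_max (below_vals s (in_range R)) m)) => [[m [Rm m_max]]|no_max].
  have [N [hN NR [above|not_above]]] := ramsey_clopen hR (le_succ_val_clopen m adm); last first.
    by have [R3 [hR3 R3N le_m]] := st N hN NR m Rm; case: (not_above R3 hR3 R3N le_m).
  exists N; split=> //; split=> [|m' [Nm' m'_max] R' hR' R'N]; first exact: stable_incl st hN NR.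
  have -> : succ_val s R' = m.
    apply: le_anti (above R' hR' R'N); apply: m_max; exists R'.
    by split=> //; [apply: incl_trans R'N NR | apply: le_refl].
  apply: le_anti; first exact/m'_max/(st N hN NR).
  exact/m_max/(below_vals_incl NR).
exists R; split=> //; first exact: incl_refl.
by split=> // m max_m; case: no_max; exists m.
Qed.

Lemma tame_dense s R : increasing R -> incl R Y ->
  exists R', [/\ increasing R', incl R' R & tame s R'].
Proof.
move=> hR RY.
case: (classic (sorted ltn s /\ forall y, y \in s -> in_range Y y)) => [[ss sY]|not_s]; last first.
  exists R; split=> [//||R' _ _ [ss sY _ _]]; first exact: incl_refl.
  by case: not_s; split=> // y /sY[].
pose R0 := shift R (sumn s).+1.
have adm0 : admissible s R0.
  split=> //; [|exact: increasing_shift|exact: incl_trans (incl_shift _ _) RY].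
  move=> y ys; split; first exact: sY.
  by rewrite /R0 /shift addn0 (leq_trans _ (increasing_ge hR _)) // ltnS leq_sumn_mem.
have [R1 [hR1 R1R0 st1]] := exists_stable adm0.
have [R2 [hR2 R2R1 [st2 max2]]] := const_at_max_dense (admissible_incl adm0 hR1 R1R0) st1.
exists R2; split=> [//||R' hR' R'R2 _].
  exact: incl_trans R2R1 (incl_trans R1R0 (incl_shift _ _)).
by split; [apply: stable_incl st2 hR' R'R2 | apply: const_at_max_incl st2 max2 hR' R'R2].
Qed.


Lemma last_prefix_lt Z n : increasing Z -> incl Z Y ->
  last 0 (prefix Z) < Z (prefix_len Z + n).
Proof.
move=> hZ ZY; have := prefix_len_gt0 hZ ZY; rewrite /prefix; case: (prefix_len Z) => // L _.
by rewrite last_mkseq increasing_ltn // ltnS leq_addr.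
Qed.

Section Ideals.
Variable N : nat -> nat.
Hypotheses (hN : increasing N) (NY : incl N Y).
Hypothesis N_tame : forall k s, subseq s (mkseq N k) -> tame s (shift N k).

Definition above_in_N a y := in_range N y /\ a < y.

Definition ideal s := below_vals s (above_in_N (last 0 s)).

Lemma ideal_frame Z : increasing Z -> incl Z N -> exists k,
  [/\ admissible (prefix Z) (shift N k), tame (prefix Z) (shift N k) &
      forall y, in_range (shift N k) y <-> above_in_N (last 0 (prefix Z)) y].
Proof.
move=> hZ ZN; have ZY := incl_trans ZN NY.
have := prefix_len_gt0 hZ ZY; rewrite /prefix; case: (prefix_len Z) => // L _.
have [j eq_j] := ZN L.
have below_j y : y \in mkseq Z L.+1 -> exists2 j', j' <= j & N j' = y.
  move=> /mem_mkseqP[i lt_i <-]; have [j' eq_j'] := ZN i; exists j' => //.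
  by rewrite -(increasing_leq hN) eq_j' eq_j (increasing_leq hZ).
exists j.+1; split.
- split; [exact: sorted_mkseq | | exact: increasing_shift | exact: incl_trans (incl_shift _ _) NY].
  move=> y ys; split; first by move: ys => /mem_mkseqP[i _ <-]; apply: ZY.
  by have [j' le_j' <-] := below_j y ys; rewrite /shift addn0 increasing_ltn.
- apply: N_tame; apply/subseq_mkseqP => //; split; first exact: sorted_mkseq.
  by move=> y /below_j[j' le_j' <-]; exists j'.
- move=> y; rewrite last_mkseq -eq_j; split=> [[n <-]|[[m <-] lt_jm]].
    by split; [exists (j.+1 + n) | rewrite /shift increasing_ltn // ltnS leq_addr].
  by rewrite increasing_ltn // in lt_jm; exists (m - j.+1); rewrite /shift subnKC.
Qed.

Lemma ideal_is_ideal Z : increasing Z -> incl Z N -> is_ideal le (ideal (prefix Z)).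
Proof.
move=> hZ ZN; have [k [adm tm eqN]] := ideal_frame hZ ZN.
have [st _] := tm _ (increasing_shift hN k) (incl_refl _) adm.
have eqI := below_vals_ext (prefix Z) eqN.
split.
- exists (succ_val (prefix Z) (shift N k)); apply/eqI; exists (shift N k).
  by split; [apply: increasing_shift | apply: incl_refl | apply: le_refl].
- by move=> x y le_xy /eqI Iy; apply/eqI; apply: below_vals_down le_xy Iy.
- move=> x y /eqI Ix /eqI Iy; have [c Ic [le_xc le_yc]] := stable_directed adm st Ix Iy.
  by exists c => //; apply/eqI.
Qed.

Lemma ideal_max_val Z m R : increasing Z -> incl Z N -> is_max (ideal (prefix Z)) m ->
  increasing R -> (forall n, above_in_N (last 0 (prefix Z)) (R n)) ->
  succ_val (prefix Z) R = m.
Proof.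
move=> hZ ZN [Im m_max] hR R_above; have [k [adm tm eqN]] := ideal_frame hZ ZN.
have [_ max_k] := tm _ (increasing_shift hN k) (incl_refl _) adm.
have eqI := below_vals_ext (prefix Z) eqN.
apply: max_k hR _; first by split=> [|x /eqI]; [apply/eqI | apply: m_max].
by move=> n; apply/eqN.
Qed.

Lemma succ_in_ideal Z : increasing Z -> incl Z N -> ideal (prefix Z) (phi (shift Z 1)).
Proof.
move=> hZ ZN; exists (shift Z (prefix_len Z)); split; first exact: increasing_shift.
  by move=> n; split; [apply: ZN | apply: last_prefix_lt (incl_trans ZN NY)].
by rewrite /succ_val /prefix prepend_mkseq_shift; apply: le_refl.
Qed.

Lemma phi_notin_ideal Z : increasing Z -> incl Z N -> ~ ideal (prefix Z) (phi Z).
Proof.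
move=> hZ ZN [R [hR R_above le_phi]]; have ZY := incl_trans ZN NY.
pose Z' := prepend (prefix Z) R.
have below_R y : y \in prefix Z -> y < R 0.
  case: (R_above 0) => _; have := prefix_len_gt0 hZ ZY; rewrite /prefix.
  case: (prefix_len Z) => // L _; rewrite last_mkseq => lt_L /mem_mkseqP[i lt_i <-].
  by apply: leq_ltn_trans lt_L; rewrite increasing_leq.
have hZ' : increasing Z' by apply: increasing_prepend => //; apply: sorted_mkseq.
have Z'Y : incl Z' Y.
  apply: incl_prepend => [y /mem_mkseqP[i _ <-]|n]; first exact: ZY.
  by have [[m <-] _] := R_above n; apply: NY.
have eq_pre : prefix Z' = prefix Z.
  by rewrite (@prefixE Z' (size (prefix Z))) mkseq_prepend_size //; apply: F_prefix.
by apply: (phi_bad hZ' Z'Y); rewrite /phi eq_pre.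
Qed.

Lemma nonprincipal_case N' : increasing N' -> incl N' N ->
  ~ (forall Z, increasing Z -> incl Z N' -> ~ is_principal le (ideal (prefix Z))).
Proof.
move=> hN' N'N nonpr.
have shrinks Z : increasing Z -> incl Z N' ->
    proper_downset le (ideal (prefix (shift Z 1))) (ideal (prefix Z)).
  move=> hZ ZN'; have ZN := incl_trans ZN' N'N.
  have hZ1 := increasing_shift hZ 1; have Z1N' := incl_trans (incl_shift Z 1) ZN'.
  have Z1N := incl_trans Z1N' N'N.
  (* [f] at the successor lies in the first ideal but not in the second. *)
  have [sub01|sub10] := le_chain (ideal_is_ideal hZ ZN) (nonpr Z hZ ZN')
    (ideal_is_ideal hZ1 Z1N) (nonpr _ hZ1 Z1N').
    by case: (phi_notin_ideal hZ1 Z1N); apply: sub01; apply: succ_in_ideal.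
  split=> //; first exact: below_vals_down.
  by exists (phi (shift Z 1)); split; [apply: succ_in_ideal | apply: phi_notin_ideal].
apply: (wf_no_descending (proper_downset_wf le_wqo)
  (a := fun n => ideal (prefix (shift N' n)))) => n.
by rewrite -addn1 -shift_shift; apply: shrinks; [apply: increasing_shift | apply: incl_shift].
Qed.

Section Principal.
Variable N' : nat -> nat.
Hypotheses (hN' : increasing N') (N'N : incl N' N).
Hypothesis principal : forall Z, increasing Z -> incl Z N' -> is_principal le (ideal (prefix Z)).

Definition derived w := F (N' 0 :: w) /\ forall y, y \in w -> in_range (shift N' 1) y.

Definition max_ideal w := epsilon (inhabits (f [::])) (is_max (ideal (N' 0 :: w))).

Lemma prepend_head Z : increasing Z -> incl Z (shift N' 1) ->
  increasing (prepend [:: N' 0] Z) /\ incl (prepend [:: N' 0] Z) N'.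
Proof.
move=> hZ ZN'; split.
  apply: increasing_prepend => // y; rewrite inE => /eqP ->.
  by have [m <-] := ZN' 0; rewrite /shift hN'.
apply: incl_prepend (incl_trans ZN' (incl_shift _ _)) => y; rewrite inE => /eqP ->.
by exists 0.
Qed.

Lemma prefix_prepend_head Z w : derived w -> w = mkseq Z (size w) ->
  prefix (prepend [:: N' 0] Z) = N' 0 :: w.
Proof.
move=> [Fw _] eq_w.
by rewrite (@prefixE _ (size [:: N' 0] + size w)) mkseq_prepend -?eq_w.
Qed.

Lemma phi_derived Z w : increasing Z -> incl Z (shift N' 1) -> derived w ->
  w = mkseq Z (size w) -> phi Z = max_ideal w.
Proof.
move=> hZ ZN' der eq_w; have [hZ0 Z0N'] := prepend_head hZ ZN'.
have Z0N := incl_trans Z0N' N'N.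
have pre := prefix_prepend_head der eq_w.
have len : prefix_len (prepend [:: N' 0] Z) = 1 + size w.
  by have := congr1 size pre; rewrite /prefix size_mkseq.
have shift_Z0 : shift (prepend [:: N' 0] Z) (1 + size w) = shift Z (size w).
  by rewrite -shift_shift shift1_prepend1.
rewrite -(ideal_max_val hZ0 Z0N (m := max_ideal w) (R := shift Z (size w))).
- by rewrite /succ_val {1}/prefix len -shift_Z0 prepend_mkseq_shift shift1_prepend1.
- rewrite pre; apply: epsilon_spec.
  by have [m Im m_max] := principal hZ0 Z0N'; rewrite pre in Im m_max; exists m.
- exact: increasing_shift.
move=> n; split.
  by rewrite /shift; have [k <-] := ZN' (size w + n); apply: N'N.
rewrite -shift_Z0 /shift -len; apply: last_prefix_lt hZ0 (incl_trans Z0N NY).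
Qed.

Lemma derived_front : front derived (shift N' 1).
Proof.
have [F_sorted F_thin _] := F_front; split.
- move=> w [Fw wN']; split=> //; have [ss _] := F_sorted _ Fw; exact: path_sorted ss.
- move=> u v [Fu _] [Fv _] eq_u.
  by have := F_thin _ _ Fu Fv; rewrite /= -eq_u => /(_ erefl) [].
move=> Z hZ ZN'; have [hZ0 Z0N'] := prepend_head hZ ZN'.
have Z0Y := incl_trans Z0N' (incl_trans N'N NY).
have := F_prefix hZ0 Z0Y; have := prefix_len_gt0 hZ0 Z0Y; rewrite /prefix.
case: (prefix_len _) => // L _; rewrite -add1n -[1]/(size [:: N' 0]) mkseq_prepend => FL.
by exists L; split=> // y /mem_mkseqP[i _ <-]; apply: ZN'.
Qed.

Lemma derived_lt : front_lt derived F.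
Proof.
split; first by exists (shift N' 1); [apply: increasing_shift | apply: derived_front].
by exists (N' 0) => w [].
Qed.

(* [max_ideal] is a bad map on the front [derived], which precedes [F]. *)
Lemma principal_case : False.
Proof.
have hY' := increasing_shift hN' 1.
have [Z [u [v [[hZ ZY' du dv] [eq_u eq_v le_uv]]]]] :=
  front_IH derived_lt hY' derived_front max_ideal.
have ZY : incl Z Y by apply: incl_trans ZY' (incl_trans (incl_shift _ _) (incl_trans N'N NY)).
have Z1Y' := incl_trans (incl_shift Z 1) ZY'.
apply: (phi_bad hZ ZY).
by rewrite (phi_derived hZ ZY' du eq_u) (phi_derived (increasing_shift hZ 1) Z1Y' dv eq_v).
Qed.

End Principal.
End Ideals.

Lemma bad_map_absurd : False.
Proof.
have [N [hN NY N_tame]] := fusion tame_incl tame_dense hY (incl_refl Y).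
have principal_clopen : clopen_on N (fun Z => is_principal le (ideal N (prefix Z))).
  move=> Z hZ ZN; exists (prefix_len Z) => Z' _ _ eqZ.
  by rewrite (prefix_eq hZ (incl_trans ZN NY) eqZ).
have [N' [hN' N'N [pr|npr]]] := ramsey_clopen hN principal_clopen.
  exact: (principal_case hN NY N_tame hN' N'N pr).
exact: (nonprincipal_case hN NY N_tame hN' N'N npr).
Qed.

End BadMap.

Theorem every_front_good F : good_front F.
Proof.
elim/(well_founded_ind front_lt_wf): F => F IH Y hY F_front f.
apply: NNPP => no_pair; apply: (bad_map_absurd hY F_front (f := f) _ IH).
by move=> Z u v hZ ZY Fu Fv eq_u eq_v le_uv; apply: no_pair; exists Z, u, v.
Qed.

End Main.

(** * Barriers *)

Lemma shift_rel_mkseq Z a b : increasing Z -> a <= b ->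
  shift_rel (mkseq Z a) (mkseq (shift Z 1) b).
Proof.
move=> hZ le_ab; exists (mkseq Z b.+1); split; first exact: sorted_mkseq.
  exists a; first by rewrite size_mkseq ltnS.
  by rewrite take_mkseq // (leq_trans le_ab).
by rewrite mkseqS_shift.
Qed.

Lemma sorted_leq_last s y : sorted ltn s -> y \in s -> y <= last 0 s.
Proof.
case/lastP: s => // s x; rewrite last_rcons mem_rcons inE => ss /orP[/eqP -> //|ys].
exact/ltnW/(sorted_rcons_lt ss).
Qed.

Lemma init_seg_mkseq Z s : increasing Z -> init_seg s (in_range Z) -> s = mkseq Z (size s).
Proof.
move=> hZ [s_nil ss sZ Z_s].
have [j eq_j] : in_range Z (last 0 s).
  by apply: sZ; case: s s_nil {ss Z_s} => // x s _; apply: mem_last.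
suff eq_s : s = mkseq Z j.+1 by rewrite {2}eq_s size_mkseq.
apply: (irr_sorted_eq ltn_trans ltnn) => //; first exact: sorted_mkseq.
move=> y; apply/idP/idP => [ys|/mem_mkseqP[i le_ij <-]].
  have [i eq_i] := sZ y ys; apply/mem_mkseqP; exists i => //.
  by rewrite ltnS -(increasing_leq hZ) eq_i eq_j sorted_leq_last.
by apply: Z_s; [exists i | rewrite -eq_j increasing_leq].
Qed.

Section Barrier.
Variable B : seq nat -> Prop.
Hypothesis B_barrier : is_barrier B.

Lemma barrier_unbounded n : exists2 m, n <= m & exists2 s, B s & m \in s.
Proof.
(* Otherwise [B] would consist of subsets of [iota 0 n], of which there are finitely many. *)
apply: NNPP => bounded; case: B_barrier => B_sorted B_inf _ _.
have [s Bs] := B_inf (codom (fun t : n.-tuple bool => mask t (iota 0 n))).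
have /subseqP[m size_m ->] : subseq s (iota 0 n).
  apply: sorted_subset_subseq (B_sorted _ Bs) (iota_ltn_sorted 0 n) _ => y ys.
  rewrite mem_iota /= ltnNge; apply/negP => le_ny.
  by apply: bounded; exists y => //; exists s.
have size_mn : size m == n by rewrite size_m size_iota.
by rewrite (codom_f (fun t : n.-tuple bool => mask t (iota 0 n)) (Tuple size_mn)).
Qed.

Lemma barrier_front Y : increasing Y -> (forall k, exists2 s, B s & Y k \in s) ->
  front (fun u => B u /\ forall y, y \in u -> in_range Y y) Y.
Proof.
case: B_barrier => B_sorted _ B_anti B_seg hY Y_base; split.
- by move=> u [Bu uY]; split=> //; apply: B_sorted.
- move=> u v [Bu _] [Bv _] eq_u; apply: B_anti => // y.
  by rewrite eq_u; apply: mem_take.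
move=> Z hZ ZY.
have Z_inf : infinite_nat_set (in_range Z).
  by move=> n; exists (Z n); [apply: increasing_ge | exists n].
have Z_base x : in_range Z x -> exists2 s, B s & x \in s.
  by move=> [i <-]; have [k <-] := ZY i; apply: Y_base.
have [s Bs Z_seg] := B_seg _ Z_inf Z_base.
exists (size s); rewrite -(init_seg_mkseq hZ Z_seg); split=> // y.
by case: Z_seg => _ _ + _ => /[apply] -[i <-]; apply: ZY.
Qed.

Lemma barrier_pair_size Z u v : increasing Z -> B u -> B v ->
  u = mkseq Z (size u) -> v = mkseq (shift Z 1) (size v) -> size u <= size v.
Proof.
case: B_barrier => _ _ B_anti _ hZ Bu Bv eq_u eq_v; rewrite leqNgt; apply/negP => lt_vu.
suff eq_vu : v = u by move: lt_vu; rewrite eq_vu ltnn.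
apply: B_anti => // y; rewrite eq_v eq_u => /mem_mkseqP[i lt_i <-].
by apply/mem_mkseqP; exists i.+1; rewrite // (leq_ltn_trans lt_i).
Qed.

End Barrier.

Theorem corollary1p5 (T : Type) (le : T -> T -> Prop) :
  is_poset le -> wqo le -> nonprincipal_ideals_chain le -> bqo le.
Proof.
move=> le_po le_wqo le_chain B B_barrier f.
have [Y hY Y_base] := exists_increasing (barrier_unbounded B_barrier).
have [Z [u [v [[hZ _ [Bu _] [Bv _]] [eq_u eq_v le_uv]]]]] :=
  every_front_good le_po le_wqo le_chain hY (barrier_front B_barrier hY Y_base) f.
exists u, v; split=> //; rewrite eq_u eq_v.
exact: shift_rel_mkseq hZ (barrier_pair_size B_barrier hZ Bu Bv eq_u eq_v).
Qed.
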